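(* Let $d$ be a positive odd integer, $n=\frac{d^2+1}{2}$, and $P_m(x)=1+x+\cdots+x^{m-1}\in\mathbb{F}_2[x]$. Then: (1) $xP_d(x^d)$ is an inverse of $P_d(x)$ both modulo $x^n-1$ and modulo $P_n(x)$, i.e. $P_d(x)\cdot xP_d(x^d)\equiv 1$ modulo each of these; and this inverse $xP_d(x^d)$ has weight $d$. (2) In $\mathbb{F}_2[x]$, $$P_n(x)=P_d(x)\big(1+x^d+x^{2d}+\cdots+x^{d(\frac{d-1}{2}-1)}\big)+\big(x^{d\frac{d-1}{2}}+x^{d\frac{d-1}{2}+1}+\cdots+x^{n-1}\big).$$
   Context: Weight means number of nonzero coefficients. *)

From HB Require Import structures.
From mathcomp Require Import all_boot all_order all_algebra.
Set Implicit Arguments. Unset Strict Implicit. Unset Printing Implicit Defensive.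
Import GRing.Theory.
Local Open Scope ring_scope.

Definition Pm (m : nat) : {poly 'F_2} := \sum_(i < m) 'X^i.

Definition weight (p : {poly 'F_2}) : nat := count (fun c => c != 0) (polyseq p).

From HB Require Import structures.
From mathcomp Require Import all_boot all_order all_algebra zify.
Import GRing.Theory.
Local Open Scope ring_scope.

(* Over F_2, P_d(x) P_d(x^d) = P_(d^2)(x), and since d^2 + 1 = 2n,
   1 + x P_(d^2)(x) = P_(2n)(x) = P_n(x) (1 + x^n) = P_n(x) (x^n - 1).
   So P_d(x) * x P_d(x^d) = 1 + P_n(x) (x^n - 1), which is 1 modulo both factors.
   The inverse is the sum of the d distinct monomials x^(di+1), and (2) splits
   P_n at degree dk, k = (d-1)/2, using P_(dk)(x) = P_d(x) (1 + x^d + ... + x^(d(k-1))). *)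

Lemma count_mem_subset (T : eqType) (s t : seq T) :
  uniq s -> uniq t -> {subset s <= t} -> count (mem s) t = size s.
Proof.
move=> us ut sst; rewrite -size_filter; apply: perm_size.
apply: uniq_perm; rewrite ?filter_uniq // => x.
by rewrite mem_filter andb_idr //; apply: sst.
Qed.

Lemma coef_sum_Xn_uniq (R : nzSemiRingType) (s : seq nat) j : uniq s ->
  (\sum_(i <- s) 'X^i : {poly R})`_j = (j \in s)%:R.
Proof.
move=> us; rewrite coef_sum -(count_uniq_mem _ us) -sum1_count natr_sum [RHS]big_mkcond.
by apply: eq_bigr => i _; rewrite coefXn /= eq_sym; case: (i == j).
Qed.

Lemma weight_sum_Xn_uniq (s : seq nat) : uniq s ->
  weight (\sum_(i <- s) 'X^i) = size s.
Proof.
move=> us; set p := \sum_(i <- s) 'X^i.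
have coefp j : (p`_j != 0) = (j \in s) by rewrite coef_sum_Xn_uniq //; case: (j \in s).
rewrite /weight -[polyseq p](mkseq_nth 0) count_map (eq_count coefp).
apply: count_mem_subset; rewrite ?iota_uniq // => j sj.
rewrite mem_iota leq0n add0n ltnNge; apply/negP => /(nth_default 0).
by apply/eqP; rewrite coefp.
Qed.

Lemma weight_sum_Xn_inj m (e : nat -> nat) : injective e ->
  weight (\sum_(i < m) 'X^(e i)) = m.
Proof.
move=> inj_e; rewrite -(big_mkord xpredT (fun i => 'X^(e i))) /index_iota subn0.
rewrite -(big_map e xpredT (fun j => 'X^j)) weight_sum_Xn_uniq ?size_map ?size_iota //.
by rewrite map_inj_uniq ?iota_uniq.
Qed.

Lemma pchar2_poly_F2 : 2 \in [pchar {poly 'F_2}].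
Proof. by rewrite pchar_poly pchar_Fp. Qed.

Lemma PmD m a : Pm (m + a) = Pm m + 'X^m * Pm a.
Proof.
rewrite /Pm big_split_ord /= mulr_sumr; congr (_ + _).
by apply: eq_bigr => i _; rewrite exprD.
Qed.

Lemma PmS m : Pm m.+1 = 1 + 'X * Pm m.
Proof. by rewrite -[m.+1]add1n PmD /Pm big_ord1. Qed.

Lemma Pm_double m : Pm (m + m) = Pm m * ('X^m - 1).
Proof. by rewrite PmD (oppr_pchar2 pchar2_poly_F2) mulrDr mulr1 mulrC addrC. Qed.

Lemma Pm_comp_Xn m e : Pm m \Po 'X^e = \sum_(i < m) 'X^(e * i).
Proof.
rewrite /Pm; elim: m => [|m IH]; first by rewrite !big_ord0 comp_poly0.
by rewrite !big_ord_recr /= comp_polyD IH comp_Xn_poly exprM.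
Qed.

Lemma Pm_mul_sum_Xn a k : Pm a * \sum_(i < k) 'X^(a * i) = Pm (a * k).
Proof.
elim: k => [|k IH]; first by rewrite big_ord0 mulr0 muln0 /Pm big_ord0.
by rewrite big_ord_recr /= mulrDr IH mulnSr PmD mulrC.
Qed.

Lemma Pm_mul_comp_Xn m : Pm m * (Pm m \Po 'X^m) = Pm (m * m).
Proof. by rewrite Pm_comp_Xn Pm_mul_sum_Xn. Qed.

Lemma Pm_split m n : (m <= n)%N -> Pm n = Pm m + \sum_(m <= i < n) 'X^i.
Proof.
move=> le_mn; rewrite /Pm -!(big_mkord xpredT (fun i => 'X^i)).
exact: big_cat_nat.
Qed.

Theorem lemma2 (d : nat) (hd0 : (0 < d)%N) (hdodd : odd d) :
  let n := ((d ^ 2 + 1) %/ 2)%N in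
  let inv := 'X * (Pm d \Po 'X^d) in
  [/\ (Pm d * inv) %% ('X^n - 1) = 1 %% ('X^n - 1),
      (Pm d * inv) %% Pm n = 1 %% Pm n,
      weight inv = d &
      Pm n = Pm d * (\sum_(i < (d - 1) %/ 2) 'X^(d * i))
             + \sum_((d * ((d - 1) %/ 2))%N <= i < n) 'X^i].
Proof.
move=> n inv.
have [k dk] : exists k, d = (2 * k + 1)%N.
  by exists d./2; rewrite -[LHS]odd_double_half hdodd -muln2 mulnC addnC.
have n_double : (n + n = (d * d).+1)%N by rewrite /n dk; lia.
have inv_spec : Pm d * inv = 1 + Pm n * ('X^n - 1).
  by rewrite mulrCA Pm_mul_comp_Xn -Pm_double n_double PmS (addKr_pchar2 pchar2_poly_F2).
split.
- by rewrite inv_spec modpD modp_mull addr0.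
- by rewrite inv_spec modpD mulrC modp_mull addr0.
- have -> : inv = \sum_(i < d) 'X^((d * i).+1)%N.
    by rewrite /inv Pm_comp_Xn mulr_sumr; apply: eq_bigr => i _; rewrite exprS.
  apply: (weight_sum_Xn_inj _ (fun i => (d * i).+1)%N) => i j [] /eqP.
  by rewrite eqn_pmul2l // => /eqP.
- rewrite Pm_mul_sum_Xn; apply: Pm_split.
  have -> : ((d - 1) %/ 2 = k)%N by rewrite dk addnK mulKn.
  have dd : (d * d = d * k + d * k + d)%N by rewrite {2}dk mulnDr muln1 mulnCA mul2n addnn.
  lia.
Qed.
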